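(* Let $\mathcal V\subseteq B(H)$ be an operator system and let $p\in\mathcal V$ be a projection in $B(H)$. Let $J_p=\operatorname{span}(C(p)\cap-C(p))$ and $J_{p_n}=\operatorname{span}(C(p_n)\cap-C(p_n))$. Then $M_n(J_p)=J_{p_n}$ for every $n\in\mathbb N$.
   Context: $p_n=I_n\otimes p$ and $C(p_n)=\{x\in M_n(\mathcal V): x=x^*,\ p_nxp_n\ge0\text{ in }B(H^n)\}$. *)

From mathcomp Require Import all_boot all_algebra.
From mathcomp Require Import complex reals.
Set Implicit Arguments. Unset Strict Implicit. Unset Printing Implicit Defensive.
Import GRing.Theory Num.Theory.
Local Open Scope ring_scope.

Section OpSys.
Variable R : realType.
Variable H : lmodType R[i].
(* inner product, linear in the first argument, conjugate-linear in the second *)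
Variable ip : H -> H -> R[i].

Definition hnorm (x : H) : R := Num.sqrt (complex.Re (ip x x)).

Definition is_hilbert : Prop :=
  [/\ (forall (a : R[i]) (x y z : H), ip (a *: x + y) z = a * ip x z + ip y z),
      (forall x y : H, ip y x = (ip x y)^*),
      (forall x : H, 0 <= ip x x),
      (forall x : H, ip x x = 0 -> x = 0)
    & (forall u : nat -> H,
         (forall e : R, 0 < e -> exists N, forall m n, (N <= m)%N -> (N <= n)%N ->
              hnorm (u m - u n) < e) ->
         exists l : H, forall e : R, 0 < e -> exists N, forall n, (N <= n)%N ->
              hnorm (u n - l) < e)].

Definition bounded_op (T : H -> H) : Prop :=
  (forall (a : R[i]) (x y : H), T (a *: x + y) = a *: T x + T y) /\
  exists M : R, forall x, hnorm (T x) <= M * hnorm x.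

Definition is_adjoint (T S : H -> H) : Prop :=
  forall x y : H, ip (T x) y = ip x (S y).

Definition selfadj (T : H -> H) : Prop := is_adjoint T T.

Definition pos_op (T : H -> H) : Prop := forall x : H, 0 <= ip (T x) x.

Definition is_projection (p : H -> H) : Prop :=
  [/\ bounded_op p, selfadj p & forall x, p (p x) = p x].

Definition operator_system (V : (H -> H) -> Prop) : Prop :=
  [/\ (forall T, V T -> bounded_op T),
      V id,
      V (fun _ => 0),
      (forall (a : R[i]) S T, V S -> V T -> V (fun x => a *: S x + T x))
    & (forall T, V T -> exists S, V S /\ is_adjoint T S)].

Definition op_span (S : (H -> H) -> Prop) (T : H -> H) : Prop :=
  exists (k : nat) (c : 'I_k -> R[i]) (s : 'I_k -> H -> H),
    (forall j, S (s j)) /\ forall x, T x = \sum_(j < k) c j *: s j x.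

Definition Cp (V : (H -> H) -> Prop) (p : H -> H) (T : H -> H) : Prop :=
  [/\ V T, selfadj T & pos_op (fun x => p (T (p x)))].

Definition Jp V p : (H -> H) -> Prop :=
  op_span (fun T => Cp V p T /\ Cp V p (fun x => - T x)).

Variable n : nat.

Definition mx_app (X : 'M[H -> H]_n) (xi : 'I_n -> H) : 'I_n -> H :=
  fun i => \sum_(j < n) X i j (xi j).

Definition ipn (xi eta : 'I_n -> H) : R[i] := \sum_(i < n) ip (xi i) (eta i).

Definition mx_selfadj (X : 'M[H -> H]_n) : Prop :=
  forall xi eta, ipn (mx_app X xi) eta = ipn xi (mx_app X eta).

Definition mx_pos (X : 'M[H -> H]_n) : Prop :=
  forall xi, 0 <= ipn (mx_app X xi) xi.

Definition pn (p : H -> H) : 'M[H -> H]_n :=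
  \matrix_(i, j) (if i == j then p else (fun _ => 0)).

Definition mx_comp (X Y : 'M[H -> H]_n) : 'M[H -> H]_n :=
  \matrix_(i, j) (fun x => \sum_(k < n) X i k (Y k j x)).

Definition in_Mn (S : (H -> H) -> Prop) (X : 'M[H -> H]_n) : Prop :=
  forall i j, S (X i j).

Definition Cpn (V : (H -> H) -> Prop) (p : H -> H) (X : 'M[H -> H]_n) : Prop :=
  [/\ in_Mn V X, mx_selfadj X & mx_pos (mx_comp (pn p) (mx_comp X (pn p)))].

Definition mx_span (S : 'M[H -> H]_n -> Prop) (X : 'M[H -> H]_n) : Prop :=
  exists (k : nat) (c : 'I_k -> R[i]) (s : 'I_k -> 'M[H -> H]_n),
    (forall j, S (s j)) /\
    forall i j' x, X i j' x = \sum_(j < k) c j *: s j i j' x.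

Definition Jpn V p : 'M[H -> H]_n -> Prop :=
  mx_span (fun X => Cpn V p X /\ Cpn V p (\matrix_(i, j) (fun x => - X i j x))).

End OpSys.

(* An operator T lies in C(p) ∩ -C(p) iff it is a selfadjoint element of V with
   <pTp x, x> = 0 for all x, i.e. (by polarization) with pTp = 0.  If g is a hermitian
   scalar matrix, g ⊗ T then lies in C(p_n) ∩ -C(p_n), and every matrix unit E_ij is a
   complex combination of the hermitian matrices E_ij + E_ji and i(E_ij - E_ji); this
   gives M_n(J_p) ⊆ J_{p_n}.  Conversely, for Y in C(p_n) ∩ -C(p_n) the entries satisfy
   Y_ji = Y_ij^*, and polarization on H^n gives p Y_ij p = 0; hence
   Y_ij = (Y_ij + Y_ji)/2 + i (-i Y_ij + i Y_ji)/2 is a combination of two elements of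
   C(p) ∩ -C(p). *)

From HB Require Import structures.
From mathcomp Require Import all_boot all_order all_algebra.
From mathcomp Require Import complex reals boolp ring.
Set Implicit Arguments. Unset Strict Implicit. Unset Printing Implicit Defensive.
Import Order.TTheory GRing.Theory Num.Theory.
Local Open Scope ring_scope.

Section LinearPredicate.
Variables (K : pzRingType) (U W : lmodType K) (f : U -> W).
Hypothesis f_linear : linear f.

Let F : {linear U -> W} := HB.pack f (GRing.isLinear.Build K U W *:%R f f_linear).

Lemma lin0 : f 0 = 0. Proof. exact: (linear0 F). Qed.
Lemma linD x y : f (x + y) = f x + f y. Proof. exact: (linearD F). Qed.
Lemma linZ a x : f (a *: x) = a *: f x. Proof. exact: (linearZ_LR F). Qed.
Lemma linN x : f (- x) = - f x. Proof. exact: (linearN F). Qed.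
Lemma lin_sum m (u : 'I_m -> U) : f (\sum_(t < m) u t) = \sum_(t < m) f (u t).
Proof. exact: (linear_sum F). Qed.

End LinearPredicate.

Lemma linear_comp (K : pzRingType) (U W Z : lmodType K) (f : W -> Z) (g : U -> W) :
  linear f -> linear g -> linear (fun x => f (g x)).
Proof. by move=> f_lin g_lin a x y; rewrite g_lin f_lin. Qed.

Section FunSpan.
Variables (K : pzRingType) (M : lmodType K) (E A : Type).
Variables (ev : E -> A -> M) (S : E -> Prop).

Definition fun_span (f : A -> M) : Prop :=
  exists k (c : 'I_k -> K) (s : 'I_k -> E),
    (forall j, S (s j)) /\ forall a, f a = \sum_(j < k) c j *: ev (s j) a.

Lemma fun_span_eq {f g} : fun_span f -> (forall a, f a = g a) -> fun_span g.
Proof. by move=> [k [c [s [Ss fE]]]] fg; exists k, c, s; split => // a; rewrite -fg fE. Qed.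

Lemma fun_span0 : fun_span (fun _ => 0).
Proof.
have s0 : 'I_0 -> E by case.
by exists 0, (fun _ => 0), s0; split=> [[]|a]; rewrite ?big_ord0.
Qed.

Lemma fun_span_gen {e} : S e -> fun_span (ev e).
Proof.
by move=> Se; exists 1, (fun _ => 1), (fun _ => e); split => // a; rewrite big_ord1 scale1r.
Qed.

Lemma fun_spanD {f g} : fun_span f -> fun_span g -> fun_span (fun a => f a + g a).
Proof.
move=> [k1 [c1 [s1 [Ss1 fE]]]] [k2 [c2 [s2 [Ss2 gE]]]].
pose pick T (u : 'I_k1 -> T) (v : 'I_k2 -> T) t :=
  match split t with inl t1 => u t1 | inr t2 => v t2 end.
exists (k1 + k2), (pick _ c1 c2), (pick _ s1 s2); split => [t|a].
  by rewrite /pick; case: split.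
rewrite fE gE big_split_ord; congr (_ + _); apply: eq_bigr => t _; rewrite /pick.
  by rewrite (unsplitK (inl t : 'I_k1 + 'I_k2)).
by rewrite (unsplitK (inr t : 'I_k1 + 'I_k2)).
Qed.

Lemma fun_spanZ d {f} : fun_span f -> fun_span (fun a => d *: f a).
Proof.
move=> [k [c [s [Ss fE]]]]; exists k, (fun j => d * c j), s; split => // a.
by rewrite fE scaler_sumr; apply: eq_bigr => j _; rewrite scalerA.
Qed.

Lemma fun_span_sum {m} {F : 'I_m -> A -> M} :
  (forall t, fun_span (F t)) -> fun_span (fun a => \sum_(t < m) F t a).
Proof.
elim: m F => [|m IHm] F spanF.
  by apply: (fun_span_eq fun_span0) => a; rewrite big_ord0.
apply: (fun_span_eq (fun_spanD (IHm _ (fun t => spanF _)) (spanF ord_max))) => a.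
by rewrite big_ord_recr.
Qed.

Lemma fun_span_lincomb {m} (c : 'I_m -> K) {F : 'I_m -> A -> M} :
  (forall t, fun_span (F t)) -> fun_span (fun a => \sum_(t < m) c t *: F t a).
Proof. by move=> spanF; apply: fun_span_sum => t; apply: fun_spanZ. Qed.

End FunSpan.
Arguments fun_span_gen {K M E A ev S e}.

Lemma alternating_skew (U W : zmodType) (f : U -> U -> W) :
  (forall x y z, f (x + y) z = f x z + f y z) ->
  (forall x y z, f x (y + z) = f x y + f x z) ->
  (forall x, f x x = 0) -> forall x y, f x y = - f y x.
Proof.
move=> fDl fDr f0 x y; apply/eqP; rewrite -addr_eq0.
by have := f0 (x + y); rewrite fDl !fDr !f0 add0r addr0 => ->.
Qed.

Lemma hermsymmxP (C : numClosedFieldType) m (g : 'M[C]_m) :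
  reflect (forall k l, g k l = (g l k)^*) (g \is hermsymmx).
Proof.
apply: (iffP (is_hermitianmxP _ _ _)) => [hg k l | hg].
  by rewrite {1}hg !mxE expr0 mul1r.
by apply/matrixP => k l; rewrite !mxE expr0 mul1r -hg.
Qed.

Section Sesquilinear.
Variables (R : realType) (H : lmodType R[i]) (ip : H -> H -> R[i]).
Hypothesis ip_linear : forall (a : R[i]) (x y z : H), ip (a *: x + y) z = a * ip x z + ip y z.
Hypothesis ip_conj : forall x y : H, ip y x = (ip x y)^*.

Let ipl_linear z : linear (fun x => ip x z : R[i]^o).
Proof. by move=> a x y; apply: ip_linear. Qed.

Lemma ip0l z : ip 0 z = 0. Proof. exact: (lin0 (ipl_linear z)). Qed.
Lemma ipDl x y z : ip (x + y) z = ip x z + ip y z. Proof. exact: (linD (ipl_linear z)). Qed.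
Lemma ipZl a x z : ip (a *: x) z = a * ip x z. Proof. exact: (linZ (ipl_linear z)). Qed.
Lemma ipNl x z : ip (- x) z = - ip x z. Proof. exact: (linN (ipl_linear z)). Qed.
Lemma ip_suml m (u : 'I_m -> H) z : ip (\sum_(t < m) u t) z = \sum_(t < m) ip (u t) z.
Proof. exact: (lin_sum (ipl_linear z)). Qed.

Lemma ip0r z : ip z 0 = 0. Proof. by rewrite ip_conj ip0l conjC0. Qed.
Lemma ipDr x y z : ip z (x + y) = ip z x + ip z y.
Proof. by rewrite !(ip_conj _ z) ipDl rmorphD. Qed.
Lemma ipZr a x z : ip z (a *: x) = a^* * ip z x.
Proof. by rewrite !(ip_conj _ z) ipZl rmorphM. Qed.
Lemma ipNr x z : ip z (- x) = - ip z x.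
Proof. by rewrite !(ip_conj _ z) ipNl rmorphN. Qed.
Lemma ip_sumr m (u : 'I_m -> H) z : ip z (\sum_(t < m) u t) = \sum_(t < m) ip z (u t).
Proof. by rewrite ip_conj ip_suml rmorph_sum; apply: eq_bigr => t _; rewrite [RHS]ip_conj. Qed.

(* Testing the skew relation against ['i *: x] makes it symmetric as well. *)
Lemma skew_pair_eq0 (S T : H -> H) : linear S ->
  (forall x y, ip (S x) y = - ip (T y) x) -> forall x y, ip (S x) y = 0.
Proof.
move=> S_lin skew x y.
have skew' : ip (T y) x = - ip (S x) y by rewrite skew opprK.
have := skew ('i *: x) y.
rewrite (linZ S_lin) ipZl ipZr conjCi skew' mulNr mulrN opprK.
move/eqP; rewrite -subr_eq0 opprK -mulr2n mulrn_eq0 /= mulf_eq0 (negbTE (neq0Ci _)) /=.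
by move/eqP.
Qed.

Lemma polarization_eq0 (S : H -> H) : linear S ->
  (forall x, ip (S x) x = 0) -> forall x y, ip (S x) y = 0.
Proof.
move=> S_lin S0; apply: (skew_pair_eq0 S_lin).
apply: (alternating_skew (f := fun x y => ip (S x) y)) => // [x y z | x y z].
  by rewrite (linD S_lin) ipDl.
exact: ipDr.
Qed.

Section CompressionVanishes.
Variables (V : (H -> H) -> Prop) (p : H -> H).
Hypothesis V_linear : forall T, V T -> linear T.
Hypothesis V0 : V (fun _ => 0).
Hypothesis V_comb : forall (a : R[i]) S T, V S -> V T -> V (fun x => a *: S x + T x).
Hypothesis p_linear : linear p.

Definition Cp_capN (T : H -> H) := Cp ip V p T /\ Cp ip V p (fun x => - T x).

Lemma V_scale a S : V S -> V (fun x => a *: S x).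
Proof.
move=> VS; have := V_comb a VS V0.
by congr V; apply: funext => x; rewrite addr0.
Qed.

Lemma V_lincomb a b S T : V S -> V T -> V (fun x => a *: S x + b *: T x).
Proof. move=> VS VT; exact (V_comb a VS (V_scale b VT)). Qed.

Lemma compress_linear T : V T -> linear (fun x => p (T (p x))).
Proof. by move=> VT; do 2![apply: linear_comp => //]; apply: V_linear. Qed.

Lemma Cp_capNE T :
  Cp_capN T <-> [/\ V T, selfadj ip T & forall x y, ip (p (T (p x))) y = 0].
Proof.
split=> [[[VT Tsa Tpos] [_ _ Tneg]] | [VT Tsa T0]].
  split=> //; apply: polarization_eq0; first exact: compress_linear.
  move=> x; apply/le_anti; rewrite Tpos andbT.
  by have := Tneg x; rewrite /= (linN p_linear) ipNl oppr_ge0.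
split; split=> //.
- by move=> x /=; rewrite T0.
- by have := V_scale (-1) VT; congr V; apply: funext => x; rewrite scaleN1r.
- by move=> x y /=; rewrite ipNl ipNr Tsa.
- by move=> x /=; rewrite (linN p_linear) ipNl T0 oppr0.
Qed.

Lemma Cp_capN_adjoint_comb a U W : V U -> V W -> is_adjoint ip U W ->
  (forall x y, ip (p (U (p x))) y = 0) -> (forall x y, ip (p (W (p x))) y = 0) ->
  Cp_capN (fun x => a *: U x + a^* *: W x).
Proof.
move=> VU VW adjUW U0 W0; apply/Cp_capNE; split.
- exact: V_lincomb.
- have adjWU : is_adjoint ip W U by move=> x y; rewrite ip_conj -adjUW -ip_conj.
  move=> x y; rewrite ipDl ipDr !ipZl !ipZr conjCK adjUW adjWU.
  exact: addrC.
- by move=> x y; rewrite (linD p_linear) !(linZ p_linear) ipDl !ipZl U0 W0 !mulr0 addr0.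
Qed.

Lemma JpE T : Jp ip V p T = fun_span idfun Cp_capN T.
Proof. by []. Qed.

Section Matrices.
Variable n : nat.

Definition Cpn_capN (X : 'M[H -> H]_n) :=
  Cpn ip V p X /\ Cpn ip V p (\matrix_(i, j) (fun x => - X i j x)).

Definition mx_eval (X : 'M[H -> H]_n) (a : 'I_n * 'I_n * H) : H := X a.1.1 a.1.2 a.2.

Lemma mx_spanP S (X : 'M[H -> H]_n) : fun_span mx_eval S (mx_eval X) <-> mx_span S X.
Proof.
split=> [[k [c [Y [SY XE]]]] | [k [c [Y [SY XE]]]]]; exists k, c, Y; split=> //.
  by move=> i j x; apply: (XE (i, j, x)).
by case=> [[i j] x]; apply: XE.
Qed.

Definition vdelta (j : 'I_n) (x : H) : {ffun 'I_n -> H} :=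
  [ffun l => if l == j then x else 0].

Lemma mx_app_vdelta (X : 'M[H -> H]_n) : (forall k l, X k l 0 = 0) ->
  forall j x k, mx_app X (vdelta j x) k = X k j x.
Proof.
move=> X0 j x k; rewrite /mx_app (bigD1 j) //= ffunE eqxx big1 ?addr0 // => l.
by rewrite ffunE => /negbTE ->.
Qed.

Lemma ipn_vdeltar u i y : ipn ip u (vdelta i y) = ip (u i) y.
Proof.
rewrite /ipn (bigD1 i) //= ffunE eqxx big1 ?addr0 // => l.
by rewrite ffunE => /negbTE ->; rewrite ip0r.
Qed.

Lemma ipn_vdeltal u j x : ipn ip (vdelta j x) u = ip x (u j).
Proof.
rewrite /ipn (bigD1 j) //= ffunE eqxx big1 ?addr0 // => l.
by rewrite ffunE => /negbTE ->; rewrite ip0l.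
Qed.

Lemma mx_form_skew (X : 'M[H -> H]_n) : (forall k l, linear (X k l)) ->
  (forall u, ipn ip (mx_app X u) u = 0) ->
  forall i j x y, ip (X i j x) y = - ip (X j i y) x.
Proof.
move=> X_lin X0 i j x y.
(* Vectors of [H^n] are taken as finite functions, which form a Z-module. *)
pose f (u v : {ffun 'I_n -> H}) := ipn ip (mx_app X u) v.
have X00 k l : X k l 0 = 0 by apply: lin0.
have := alternating_skew (f := f) _ _ (fun u => X0 u) (vdelta j x) (vdelta i y).
rewrite /f !ipn_vdeltar !mx_app_vdelta //; apply.
  move=> u v w; rewrite /ipn -big_split; apply: eq_bigr => k _ /=.
  rewrite /mx_app -ipDl -big_split; congr ip; apply: eq_bigr => l _.
  by rewrite ffunE linD.
move=> u v w; rewrite /ipn -big_split; apply: eq_bigr => k _ /=.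
by rewrite ffunE ipDr.
Qed.

Lemma compress_mxE (Y : 'M[H -> H]_n) : (forall k l, Y k l 0 = 0) ->
  forall i j x, mx_comp (pn n p) (mx_comp Y (pn n p)) i j x = p (Y i j (p x)).
Proof.
move=> Y0 i j x; rewrite /mx_comp /pn !mxE (bigD1 i) //= big1 => [|k].
  rewrite !mxE eqxx addr0 (bigD1 j) //= !mxE eqxx big1 ?addr0 // => l.
  by rewrite !mxE eq_sym => /negbTE ->.
by rewrite !mxE eq_sym => /negbTE ->.
Qed.

Lemma Cpn_entry_adjoint (Y : 'M[H -> H]_n) :
  Cpn ip V p Y -> forall i j, is_adjoint ip (Y i j) (Y j i).
Proof.
move=> [VY Ysa _] i j x y.
have Y0 k l : Y k l 0 = 0 by apply/lin0/V_linear.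
by have := Ysa (vdelta j x) (vdelta i y); rewrite ipn_vdeltar ipn_vdeltal !mx_app_vdelta.
Qed.

Lemma Cpn_capN_compress_eq0 Y : Cpn_capN Y ->
  forall i j x y, ip (p (Y i j (p x))) y = 0.
Proof.
move=> [[VY _ Ypos] [_ _ Yneg]] i j.
set Z := mx_comp _ (mx_comp Y _) in Ypos.
have Y_lin k l : linear (Y k l) by apply: V_linear.
have ZE : forall k l x, Z k l x = p (Y k l (p x)).
  by apply: compress_mxE => k l; apply: lin0.
have Z_lin k l : linear (Z k l).
  by move=> a x y; rewrite !ZE; apply: compress_linear.
have Zneg u : ipn ip (mx_app Z u) u <= 0.
  rewrite -oppr_ge0 /ipn -sumrN; move: (Yneg u); congr (0 <= _).
  apply: eq_bigr => k _; rewrite /mx_app -ipNl -sumrN; congr ip; apply: eq_bigr => l _.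
  rewrite compress_mxE ?ZE ?mxE ?(linN (Y_lin _ _)) ?(linN p_linear) // => k' l'.
  by rewrite mxE lin0 ?oppr0.
have Z0 u : ipn ip (mx_app Z u) u = 0 by apply/le_anti; rewrite Zneg Ypos.
have skew := mx_form_skew Z_lin Z0.
move=> x y; rewrite -ZE; apply: (skew_pair_eq0 (Z_lin i j) (T := Z j i)) => x' y'.
exact: skew.
Qed.

Definition tensor_mx (g : 'M[R[i]]_n) (s : H -> H) : 'M[H -> H]_n :=
  \matrix_(k, l) (fun x => g k l *: s x).

Lemma tensor_mx_Cpn g s : g \is hermsymmx -> V s -> selfadj ip s ->
  (forall x y, ip (p (s (p x))) y = 0) -> Cpn ip V p (tensor_mx g s).
Proof.
move=> /hermsymmxP g_herm Vs ssa s0; split.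
- by move=> k l; rewrite mxE; apply: V_scale.
- move=> xi eta; rewrite /ipn /mx_app.
  transitivity (\sum_(k < n) \sum_(l < n) g k l * ip (xi l) (s (eta k))).
    apply: eq_bigr => k _; rewrite ip_suml; apply: eq_bigr => l _.
    by rewrite mxE ipZl ssa.
  rewrite exchange_big; apply: eq_bigr => l _; rewrite ip_sumr; apply: eq_bigr => k _.
  by rewrite mxE ipZr -g_herm.
- move=> xi; rewrite /ipn big1 // => k _; rewrite /mx_app ip_suml big1 // => l _.
  rewrite compress_mxE ?mxE ?(linZ p_linear) ?ipZl ?s0 ?mulr0 // => k' l'.
  by rewrite mxE (lin0 (V_linear Vs)) scaler0.
Qed.

Lemma tensor_mx_Cpn_capN g s : g \is hermsymmx -> Cp_capN s -> Cpn_capN (tensor_mx g s).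
Proof.
move=> g_herm /Cp_capNE[Vs ssa s0]; split; first exact: tensor_mx_Cpn.
have -> : \matrix_(i, j) (fun x => - tensor_mx g s i j x) = tensor_mx (- g) s.
  apply/matrixP => i j; rewrite /tensor_mx !mxE.
  by apply: funext => x; rewrite scaleNr.
apply: tensor_mx_Cpn => //; apply/hermsymmxP => k l.
by rewrite !mxE rmorphN (hermsymmxP _ g_herm k l).
Qed.

(* [E_ij = ((E_ij + E_ji) - 'i ('i (E_ij - E_ji))) / 2], a combination of hermitian matrices. *)
Lemma tensor_delta_span s i j : Cp_capN s ->
  fun_span mx_eval Cpn_capN (mx_eval (tensor_mx (delta_mx i j) s)).
Proof.
move=> Ss.
pose g1 : 'M[R[i]]_n := delta_mx i j + delta_mx j i.
pose g2 : 'M[R[i]]_n := 'i *: (delta_mx i j - delta_mx j i).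
have g1_herm : g1 \is hermsymmx.
  apply/hermsymmxP => k l; rewrite !mxE rmorphD /= !conjC_nat addrC.
  by rewrite (andbC (l == j)) (andbC (l == i)).
have g2_herm : g2 \is hermsymmx.
  apply/hermsymmxP => k l; rewrite !mxE rmorphM rmorphB /= conjCi !conjC_nat.
  by rewrite (andbC (l == j)) (andbC (l == i)); ring.
have span_g g : g \is hermsymmx -> fun_span mx_eval Cpn_capN (mx_eval (tensor_mx g s)).
  by move=> g_herm; apply/fun_span_gen/tensor_mx_Cpn_capN.
apply: (fun_span_eq (fun_spanD (fun_spanZ 2^-1 (span_g _ g1_herm))
                               (fun_spanZ (- 'i / 2) (span_g _ g2_herm)))).
case=> [[k l] x]; rewrite /mx_eval /= !mxE !scalerA -scalerDl.
by congr (_ *: _); field: (sqrCi R[i]).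
Qed.

Lemma mx_entry_sum_delta (X : 'M[H -> H]_n) i j x :
  X i j x = \sum_(i0 < n) \sum_(j0 < n) delta_mx i0 j0 i j *: X i0 j0 x.
Proof.
rewrite (bigD1 i) //= [X in _ + X]big1 => [|i0 ne_i0].
  rewrite addr0 (bigD1 j) //= big1 => [|j0 ne_j0].
    by rewrite mxE !eqxx scale1r addr0.
  by rewrite mxE eq_sym (negbTE ne_j0) andbF scale0r.
by apply: big1 => j0 _; rewrite mxE eq_sym (negbTE ne_i0) scale0r.
Qed.

Lemma Jpn_of_Mn_Jp (X : 'M[H -> H]_n) : in_Mn (Jp ip V p) X -> Jpn ip V p X.
Proof.
move=> XJ; apply/(@mx_spanP Cpn_capN).
have entry_span i0 j0 :
    fun_span mx_eval Cpn_capN (fun a => delta_mx i0 j0 a.1.1 a.1.2 *: X i0 j0 a.2).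
  have [k [c [s [Ss XE]]]] := XJ i0 j0.
  apply: (fun_span_eq (fun_span_lincomb c (fun t => tensor_delta_span i0 j0 (Ss t)))).
  case=> [[i j] x]; rewrite /mx_eval /= XE scaler_sumr; apply: eq_bigr => t _.
  by rewrite mxE !scalerA mulrC.
apply: (fun_span_eq (fun_span_sum (fun i0 => fun_span_sum (entry_span i0)))).
by case=> [[i j] x]; rewrite /mx_eval /= [RHS]mx_entry_sum_delta.
Qed.

Lemma Cpn_capN_entry_Jp Y i j : Cpn_capN Y -> Jp ip V p (Y i j).
Proof.
move=> YC; have Y0 := Cpn_capN_compress_eq0 YC.
have adj := Cpn_entry_adjoint YC.1; have [VY _ _] := YC.1.
have comb a := Cp_capN_adjoint_comb a (VY i j) (VY j i) (adj i j) (Y0 i j) (Y0 j i).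
rewrite JpE; apply: (fun_span_eq (fun_spanD (fun_span_gen (comb 2^-1))
                                     (fun_spanZ 'i (fun_span_gen (comb (- 'i / 2)))))) => x.
rewrite scalerDr !scalerA addrACA -!scalerDl.
have -> : 2^-1 + 'i * (- 'i / 2) = 1 :> R[i] by field: (sqrCi R[i]).
have -> : (2^-1)^* + 'i * (- 'i / 2)^* = 0 :> R[i].
  by rewrite rmorphM rmorphN /= conjCi fmorphV /= conjC_nat; field: (sqrCi R[i]).
by rewrite scale1r scale0r addr0.
Qed.

Lemma Mn_Jp_of_Jpn (X : 'M[H -> H]_n) : Jpn ip V p X -> in_Mn (Jp ip V p) X.
Proof.
move/(@mx_spanP Cpn_capN) => [k [c [Y [YC XE]]]] i j.
rewrite JpE.
apply: (fun_span_eq (fun_span_lincomb c (fun t => Cpn_capN_entry_Jp i j (YC t)))) => x.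
by rewrite [RHS](XE (i, j, x)).
Qed.

End Matrices.
End CompressionVanishes.
End Sesquilinear.

Theorem lemma3p4 (R : realType) (H : lmodType R[i]) (ip : H -> H -> R[i])
  (V : (H -> H) -> Prop) (p : H -> H) :
  is_hilbert ip ->
  operator_system ip V ->
  V p ->
  is_projection ip p ->
  forall (n : nat) (X : 'M[H -> H]_n),
    in_Mn (Jp ip V p) X <-> Jpn ip V p X.
Proof.
move=> [ip_linear ip_conj _ _ _] [V_bounded _ V0 V_comb _] _ [[p_linear _] _ _] n X.
have V_linear T : V T -> linear T by case/V_bounded.
split; [exact: Jpn_of_Mn_Jp | exact: Mn_Jp_of_Jpn].
Qed.
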